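(* Any timelike minimal surface in $\mathbb{L}^3$ without singularities is locally a graph of a function over the $x$-$z$ plane or over the $y$-$z$ plane, i.e. locally of the form $(x,\psi(x,z),z)$ or $(\psi(y,z),y,z)$, and the height function $\psi$ is a Born-Infeld soliton (in the variables $(x,z)$, respectively $(y,z)$).
   Context: $\mathbb{L}^3$ denotes $\mathbb{R}^3$ with the Lorentzian metric $ds^2=dx^2+dy^2-dz^2$. A surface is timelike if its induced metric is Lorentzian, and minimal if its mean curvature vanishes; ''without singularities'' means it is a regular immersion with nondegenerate (timelike) induced metric everywhere. A function $\psi$ on an open set of the $(u,v)$-plane is a Born-Infeld soliton (in the variables $u,v$) if $(1-\psi_v^2)\psi_{uu}+2\psi_u\psi_v\psi_{uv}-(1+\psi_u^2)\psi_{vv}=0$. *)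

From Stdlib Require Import Reals.
From Coquelicot Require Import Coquelicot.
Open Scope R_scope.

Definition open2 (U : R -> R -> Prop) : Prop :=
  open (fun p : R * R => U (fst p) (snd p)).

Definition d1 (g : R -> R -> R) : R -> R -> R :=
  fun u v => Derive (fun t => g t v) u.
Definition d2 (g : R -> R -> R) : R -> R -> R :=
  fun u v => Derive (fun t => g u t) v.

Definition cont_on (U : R -> R -> Prop) (g : R -> R -> R) : Prop :=
  forall u v, U u v -> continuous (fun p : R * R => g (fst p) (snd p)) (u, v).

Fixpoint Ck (k : nat) (U : R -> R -> Prop) (g : R -> R -> R) : Prop :=
  match k with
  | O => cont_on U g
  | S k' =>
      cont_on U g /\
      (forall u v, U u v -> ex_derive (fun t => g t v) u /\ ex_derive (fun t => g u t) v) /\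
      Ck k' U (d1 g) /\ Ck k' U (d2 g)
  end.

Definition smooth_on (U : R -> R -> Prop) (g : R -> R -> R) : Prop :=
  forall k, Ck k U g.

Definition lprod (a1 a2 a3 b1 b2 b3 : R) : R := a1 * b1 + a2 * b2 - a3 * b3.

Section Surface.
Variables X Y Z : R -> R -> R.

Definition E_ff u v := lprod (d1 X u v) (d1 Y u v) (d1 Z u v) (d1 X u v) (d1 Y u v) (d1 Z u v).
Definition F_ff u v := lprod (d1 X u v) (d1 Y u v) (d1 Z u v) (d2 X u v) (d2 Y u v) (d2 Z u v).
Definition G_ff u v := lprod (d2 X u v) (d2 Y u v) (d2 Z u v) (d2 X u v) (d2 Y u v) (d2 Z u v).

(** regular immersion: f_u and f_v linearly independent (Euclidean cross
    product nonzero) *)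
Definition regular_at u v : Prop :=
  let a1 := d1 X u v in let a2 := d1 Y u v in let a3 := d1 Z u v in
  let b1 := d2 X u v in let b2 := d2 Y u v in let b3 := d2 Z u v in
  (a2 * b3 - a3 * b2 <> 0) \/ (a3 * b1 - a1 * b3 <> 0) \/ (a1 * b2 - a2 * b1 <> 0).

(** timelike: the induced metric is Lorentzian (negative determinant) *)
Definition timelike_at u v : Prop := E_ff u v * G_ff u v - F_ff u v ^ 2 < 0.

(** Lorentzian cross product f_u x_L f_v (Lorentz-orthogonal to f_u and f_v) *)
Definition N1 u v := d1 Y u v * d2 Z u v - d1 Z u v * d2 Y u v.
Definition N2 u v := d1 Z u v * d2 X u v - d1 X u v * d2 Z u v.
Definition N3 u v := - (d1 X u v * d2 Y u v - d1 Y u v * d2 X u v).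

Definition nrm u v := sqrt (Rabs (lprod (N1 u v) (N2 u v) (N3 u v) (N1 u v) (N2 u v) (N3 u v))).
Definition n1 u v := N1 u v / nrm u v.
Definition n2 u v := N2 u v / nrm u v.
Definition n3 u v := N3 u v / nrm u v.

Definition L_sf u v := lprod (d1 (d1 X) u v) (d1 (d1 Y) u v) (d1 (d1 Z) u v) (n1 u v) (n2 u v) (n3 u v).
Definition M_sf u v := lprod (d2 (d1 X) u v) (d2 (d1 Y) u v) (d2 (d1 Z) u v) (n1 u v) (n2 u v) (n3 u v).
Definition N_sf u v := lprod (d2 (d2 X) u v) (d2 (d2 Y) u v) (d2 (d2 Z) u v) (n1 u v) (n2 u v) (n3 u v).

Definition mean_curv u v : R :=
  (E_ff u v * N_sf u v - 2 * F_ff u v * M_sf u v + G_ff u v * L_sf u v)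
  / (2 * (E_ff u v * G_ff u v - F_ff u v ^ 2)).

Definition timelike_minimal_surface (U : R -> R -> Prop) : Prop :=
  open2 U /\ smooth_on U X /\ smooth_on U Y /\ smooth_on U Z /\
  (forall u v, U u v -> regular_at u v /\ timelike_at u v /\ mean_curv u v = 0).

End Surface.

Definition born_infeld (D : R -> R -> Prop) (psi : R -> R -> R) : Prop :=
  Ck 2 D psi /\
  forall u v, D u v ->
    (1 - d2 psi u v ^ 2) * d1 (d1 psi) u v
    + 2 * d1 psi u v * d2 psi u v * d1 (d2 psi) u v
    - (1 + d1 psi u v ^ 2) * d2 (d2 psi) u v = 0.

(* Write f = (X, Y, Z) and (N1, N2, N3) = f_u x_L f_v for the Lorentzian cross product.
   Timelikeness says N1^2 + N2^2 - N3^2 = -(E G - F^2) > 0, so N1 or N2 is nonzero, and these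
   are (up to sign) the Jacobians of (Y, Z) and of (X, Z) with respect to (u, v).  When the
   Jacobian J of (X, Z) is nonzero, the inverse function theorem (Newton's method with a frozen
   Jacobian is a contraction) makes (X, Z) a homeomorphism from a neighbourhood W onto an open
   set D of the x-z plane with a Lipschitz inverse G, and the surface over D is the graph of
   psi = Y o G.  The Lipschitz bound makes G differentiable, with the derivative given by
   Cramer's rule, and two applications of the chain rule show that J^3 times
   (1 - psi_z^2) psi_xx + 2 psi_x psi_z psi_xz - (1 + psi_x^2) psi_zz equals
   E <f_vv, N> - 2 F <f_uv, N> + G <f_uu, N>, the numerator of the mean curvature, which
   vanishes.  The other case follows by exchanging X and Y, which preserves timelikeness and
   changes the sign of the mean curvature. *)

From Stdlib Require Import Reals Lra Lia ClassicalEpsilon.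
From Coquelicot Require Import Coquelicot.
Open Scope R_scope.

(** * Calculus in the plane *)

Lemma open2_locally_2d (U : R -> R -> Prop) u v : open2 U -> U u v -> locally_2d U u v.
Proof. intros HU Huv. apply locally_2d_locally, (HU (u, v)), Huv. Qed.

Lemma locally_2d_of_open2 (U P : R -> R -> Prop) u v :
  open2 U -> U u v -> (forall u' v', U u' v' -> P u' v') -> locally_2d P u v.
Proof.
  intros HU Huv HP. apply locally_2d_impl with U; [apply locally_2d_forall, HP|].
  apply open2_locally_2d; assumption.
Qed.

Lemma open2_of_locally_2d (W : R -> R -> Prop) :
  (forall u v, W u v -> locally_2d W u v) -> open2 W.
Proof. intros H [u v] Hw. apply locally_2d_locally, H, Hw. Qed.

Definition square (u0 v0 r u v : R) : Prop := Rabs (u - u0) < r /\ Rabs (v - v0) < r.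

Lemma square_center u0 v0 r : 0 < r -> square u0 v0 r u0 v0.
Proof. unfold square. rewrite !Rminus_eq_0, Rabs_R0. tauto. Qed.

Lemma open2_square u0 v0 r : open2 (square u0 v0 r).
Proof.
  apply open2_of_locally_2d. intros u v [Hu Hv].
  assert (He : 0 < Rmin (r - Rabs (u - u0)) (r - Rabs (v - v0))) by (apply Rmin_pos; lra).
  exists (mkposreal _ He). simpl. intros u' v' h1 h2.
  generalize (Rmin_l (r - Rabs (u - u0)) (r - Rabs (v - v0)))
    (Rmin_r (r - Rabs (u - u0)) (r - Rabs (v - v0))).
  generalize (Rabs_triang (u' - u) (u - u0)) (Rabs_triang (v' - v) (v - v0)).
  replace (u' - u + (u - u0)) with (u' - u0) by ring.
  replace (v' - v + (v - v0)) with (v' - v0) by ring.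
  unfold square. lra.
Qed.

Lemma locally_2d_square (P : R -> R -> Prop) u0 v0 :
  locally_2d P u0 v0 -> exists r, 0 < r /\ forall u v, square u0 v0 r u v -> P u v.
Proof. intros [r Hr]. exists r. split; [apply cond_pos|]. intros u v [Hu Hv]. auto. Qed.

Lemma continuity_2d_pt_comp (f g1 g2 : R -> R -> R) x y :
  continuity_2d_pt f (g1 x y) (g2 x y) -> continuity_2d_pt g1 x y -> continuity_2d_pt g2 x y ->
  continuity_2d_pt (fun u v => f (g1 u v) (g2 u v)) x y.
Proof.
  intros Hf H1 H2 eps. destruct (Hf eps) as [e He].
  apply locally_2d_impl with (fun u v => Rabs (g1 u v - g1 x y) < e /\ Rabs (g2 u v - g2 x y) < e).
  - apply locally_2d_forall. intros u v [h1 h2]. apply He; assumption.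
  - apply locally_2d_and; [apply H1|apply H2].
Qed.

Lemma lipschitz_continuity_2d_pt (D : R -> R -> Prop) (g : R -> R -> R) K x z :
  open2 D -> D x z -> 0 <= K ->
  (forall x' z', D x' z' -> Rabs (g x' z' - g x z) <= K * (Rabs (x' - x) + Rabs (z' - z))) ->
  continuity_2d_pt g x z.
Proof.
  intros HD Hxz HK HL eps.
  destruct (open2_locally_2d D x z HD Hxz) as [d0 Hd0].
  assert (He : 0 < Rmin d0 (eps / (2 * K + 2)))
    by (apply Rmin_pos; [apply cond_pos|apply Rdiv_lt_0_compat; [apply cond_pos|lra]]).
  exists (mkposreal _ He). simpl. intros x' z' Hx Hz.
  generalize (Rmin_l d0 (eps / (2 * K + 2))) (Rmin_r d0 (eps / (2 * K + 2))). intros M1 M2.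
  eapply Rle_lt_trans; [apply HL, Hd0; lra|].
  assert (Hq : (2 * K + 2) * (eps / (2 * K + 2)) = eps) by (field; lra).
  generalize (cond_pos eps) (Rabs_pos (x' - x)) (Rabs_pos (z' - z)). nra.
Qed.

Section AgreeOnOpen.

Variables (D : R -> R -> Prop) (f g : R -> R -> R) (x z : R).
Hypotheses (HD : open2 D) (Hxz : D x z) (Hfg : forall x' z', D x' z' -> f x' z' = g x' z').

Lemma is_derive_agree_1 l : is_derive (fun t => g t z) x l -> is_derive (fun t => f t z) x l.
Proof.
  apply is_derive_ext_loc, (locally_2d_1d_const_y (fun a b => g a b = f a b)).
  apply (locally_2d_of_open2 D); auto. intros; symmetry; auto.
Qed.

Lemma is_derive_agree_2 l : is_derive (fun t => g x t) z l -> is_derive (fun t => f x t) z l.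
Proof.
  apply is_derive_ext_loc, (locally_2d_1d_const_x (fun a b => g a b = f a b)).
  apply (locally_2d_of_open2 D); auto. intros; symmetry; auto.
Qed.

Lemma continuity_2d_pt_agree : continuity_2d_pt g x z -> continuity_2d_pt f x z.
Proof.
  apply continuity_2d_pt_ext_loc. apply (locally_2d_of_open2 D); auto. intros; symmetry; auto.
Qed.

End AgreeOnOpen.

Record C1_at (g : R -> R -> R) (u v : R) : Prop := {
  C1_cont : continuity_2d_pt g u v;
  C1_ex_d1 : ex_derive (fun t => g t v) u;
  C1_ex_d2 : ex_derive (fun t => g u t) v;
  C1_cont_d1 : continuity_2d_pt (d1 g) u v;
  C1_cont_d2 : continuity_2d_pt (d2 g) u v }.

Lemma Ck1_C1_at (U : R -> R -> Prop) (g : R -> R -> R) u v : Ck 1 U g -> U u v -> C1_at g u v.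
Proof.
  intros [H0 [H1 [H2 H3]]] Huv. destruct (H1 u v Huv).
  constructor; auto; apply continuity_2d_pt_filterlim; [apply H0 | apply H2 | apply H3]; exact Huv.
Qed.

Lemma smooth_on_C1 (U : R -> R -> Prop) (g : R -> R -> R) :
  smooth_on U g -> Ck 1 U g /\ Ck 1 U (d1 g) /\ Ck 1 U (d2 g).
Proof. intros H. exact (conj (H 1%nat) (proj2 (proj2 (H 2%nat)))). Qed.

Lemma smooth_on_C1_d1 (U : R -> R -> Prop) (g : R -> R -> R) : smooth_on U g -> Ck 1 U (d1 g).
Proof. intros H. exact (proj1 (proj2 (smooth_on_C1 U g H))). Qed.

Lemma smooth_on_C1_d2 (U : R -> R -> Prop) (g : R -> R -> R) : smooth_on U g -> Ck 1 U (d2 g).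
Proof. intros H. exact (proj2 (proj2 (smooth_on_C1 U g H))). Qed.

Lemma Ck2_of_partials (D : R -> R -> Prop) (f : R -> R -> R) :
  (forall x z, D x z ->
    continuity_2d_pt f x z /\ continuity_2d_pt (d1 f) x z /\ continuity_2d_pt (d2 f) x z /\
    continuity_2d_pt (d1 (d1 f)) x z /\ continuity_2d_pt (d2 (d1 f)) x z /\
    continuity_2d_pt (d1 (d2 f)) x z /\ continuity_2d_pt (d2 (d2 f)) x z) ->
  (forall x z, D x z ->
    ex_derive (fun t => f t z) x /\ ex_derive (fun t => f x t) z /\
    ex_derive (fun t => d1 f t z) x /\ ex_derive (fun t => d1 f x t) z /\
    ex_derive (fun t => d2 f t z) x /\ ex_derive (fun t => d2 f x t) z) ->
  Ck 2 D f.
Proof.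
  intros Hc He.
  assert (Hco : forall g, (forall x z, D x z -> continuity_2d_pt g x z) -> cont_on D g)
    by (intros g Hg x z Hxz; apply continuity_2d_pt_filterlim, Hg, Hxz).
  refine (conj _ (conj _ (conj (conj _ (conj _ (conj _ _))) (conj _ (conj _ (conj _ _))))));
    try apply Hco; intros x z Hxz;
    destruct (Hc x z Hxz) as (?&?&?&?&?&?&?); destruct (He x z Hxz) as (?&?&?&?&?&?);
    try split; assumption.
Qed.

Lemma MVT_between (f : R -> R) a b :
  (forall t, Rmin a b <= t <= Rmax a b -> ex_derive f t) ->
  exists c, Rmin a b <= c <= Rmax a b /\ f b - f a = Derive f c * (b - a).
Proof.
  intros H. apply MVT_gen.
  - intros t Ht. apply Derive_correct, H. lra.
  - intros t Ht. apply continuity_pt_filterlim, (@ex_derive_continuous R_AbsRing R_NormedModule).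
    apply H, Ht.
Qed.

Lemma Rabs_between a b c x r :
  Rmin a b <= c <= Rmax a b -> Rabs (a - x) < r -> Rabs (b - x) < r -> Rabs (c - x) < r.
Proof.
  unfold Rmin, Rmax. destruct (Rle_dec a b); intros [h1 h2] ha hb;
  apply Rabs_def1; apply Rabs_def2 in ha; apply Rabs_def2 in hb; lra.
Qed.

Lemma mean_value_square (g : R -> R -> R) u0 v0 r :
  (forall u v, square u0 v0 r u v ->
     ex_derive (fun t => g t v) u /\ ex_derive (fun t => g u t) v) ->
  forall u v u' v', square u0 v0 r u v -> square u0 v0 r u' v' ->
  exists xi eta, square u0 v0 r xi v /\ square u0 v0 r u' eta /\
    g u v - g u' v' = d1 g xi v * (u - u') + d2 g u' eta * (v - v').
Proof.
  intros Hd u v u' v' [Hu Hv] [Hu' Hv'].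
  destruct (MVT_between (fun t => g t v) u' u) as [xi [Hxi Exi]].
  { intros t Ht. refine (proj1 (Hd t v (conj _ Hv))). exact (Rabs_between _ _ _ _ _ Ht Hu' Hu). }
  destruct (MVT_between (fun t => g u' t) v' v) as [eta [Heta Eeta]].
  { intros t Ht. refine (proj2 (Hd u' t (conj Hu' _))). exact (Rabs_between _ _ _ _ _ Ht Hv' Hv). }
  exists xi, eta. split; [split; [exact (Rabs_between _ _ _ _ _ Hxi Hu' Hu)|exact Hv]|].
  split; [split; [exact Hu'|exact (Rabs_between _ _ _ _ _ Heta Hv' Hv)]|].
  unfold d1, d2. lra.
Qed.

Lemma differentiable_of_continuous_partials (f : R -> R -> R) x y :
  locally_2d (fun u v => ex_derive (fun t => f t v) u /\ ex_derive (fun t => f u t) v) x y ->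
  continuity_2d_pt (d1 f) x y -> continuity_2d_pt (d2 f) x y ->
  differentiable_pt_lim f x y (d1 f x y) (d2 f x y).
Proof.
  intros Hex Hc1 Hc2 eps.
  assert (He2 : 0 < eps / 2) by (generalize (cond_pos eps); lra).
  destruct (locally_2d_square _ _ _ (locally_2d_and _ _ _ _ Hex
    (locally_2d_and _ _ _ _ (Hc1 (mkposreal _ He2)) (Hc2 (mkposreal _ He2))))) as [r [Hr Hsq]].
  exists (mkposreal r Hr). intros u v Hu Hv.
  assert (Hc := square_center x y r Hr).
  destruct (mean_value_square f x y r (fun p q H => proj1 (Hsq p q H)) u v x y (conj Hu Hv) Hc)
    as [xi [eta [Hxi [Heta E]]]].
  assert (B1 := proj1 (proj2 (Hsq xi v Hxi))). assert (B2 := proj2 (proj2 (Hsq x eta Heta))).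
  simpl in B1, B2.
  replace (f u v - f x y - (d1 f x y * (u - x) + d2 f x y * (v - y))) with
    ((d1 f xi v - d1 f x y) * (u - x) + (d2 f x eta - d2 f x y) * (v - y)) by lra.
  eapply Rle_trans; [apply Rabs_triang|]. rewrite !Rabs_mult.
  assert (M1 := Rmax_l (Rabs (u - x)) (Rabs (v - y))).
  assert (M2 := Rmax_r (Rabs (u - x)) (Rabs (v - y))).
  assert (P1 := Rabs_pos (u - x)). assert (P2 := Rabs_pos (v - y)).
  assert (P3 := Rabs_pos (d1 f xi v - d1 f x y)). assert (P4 := Rabs_pos (d2 f x eta - d2 f x y)).
  nra.
Qed.

Lemma Ck1_differentiable (U : R -> R -> Prop) (h : R -> R -> R) u v :
  open2 U -> Ck 1 U h -> U u v -> differentiable_pt_lim h u v (d1 h u v) (d2 h u v).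
Proof.
  intros HU Hh Huv. destruct (Ck1_C1_at U h u v Hh Huv).
  apply differentiable_of_continuous_partials; auto.
  apply (locally_2d_of_open2 U); auto.
  intros u' v' H. destruct (Ck1_C1_at U h u' v' Hh H). auto.
Qed.

Lemma smooth_d1_d2_comm (U : R -> R -> Prop) (g : R -> R -> R) u v :
  open2 U -> smooth_on U g -> U u v -> d1 (d2 g) u v = d2 (d1 g) u v.
Proof.
  intros HU Hg Huv. destruct (smooth_on_C1 U g Hg) as [H0 [H1 H2]].
  apply Schwarz.
  - apply (locally_2d_of_open2 U); auto. intros u' v' H.
    destruct (Ck1_C1_at U g u' v' H0 H), (Ck1_C1_at U _ u' v' H1 H), (Ck1_C1_at U _ u' v' H2 H).
    auto.
  - exact (C1_cont_d1 _ _ _ (Ck1_C1_at U _ u v H2 Huv)).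
  - exact (C1_cont_d2 _ _ _ (Ck1_C1_at U _ u v H1 Huv)).
Qed.

Lemma is_derive_comp_2d (h : R -> R -> R) (g1 g2 : R -> R) t0 hu hv l1 l2 :
  differentiable_pt_lim h (g1 t0) (g2 t0) hu hv ->
  is_derive g1 t0 l1 -> is_derive g2 t0 l2 ->
  is_derive (fun t => h (g1 t) (g2 t)) t0 (hu * l1 + hv * l2).
Proof.
  intros Hh H1 H2.
  apply is_derive_Reals, derivable_pt_lim_comp_2d; auto; apply is_derive_Reals; auto.
Qed.

Lemma is_derive_eq (f : R -> R) (x l l' : R) : is_derive f x l -> l = l' -> is_derive f x l'.
Proof. intros H E. subst. exact H. Qed.

(** * A contraction principle *)

Definition dist1 (p q : R * R) : R := Rabs (fst p - fst q) + Rabs (snd p - snd q).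

Lemma dist1_triangle p q s : dist1 p s <= dist1 p q + dist1 q s.
Proof.
  unfold dist1.
  assert (H1 := Rabs_triang (fst p - fst q) (fst q - fst s)).
  assert (H2 := Rabs_triang (snd p - snd q) (snd q - snd s)).
  replace (fst p - fst q + (fst q - fst s)) with (fst p - fst s) in H1 by ring.
  replace (snd p - snd q + (snd q - snd s)) with (snd p - snd s) in H2 by ring. lra.
Qed.

Lemma dist1_sym p q : dist1 p q = dist1 q p.
Proof. unfold dist1. rewrite (Rabs_minus_sym (fst p)), (Rabs_minus_sym (snd p)). ring. Qed.

Lemma dist1_refl p : dist1 p p = 0.
Proof. unfold dist1. rewrite !Rminus_eq_0, Rabs_R0. ring. Qed.

Lemma dist1_le_0 p q : dist1 p q <= 0 -> p = q.
Proof.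
  destruct p as [p1 p2], q as [q1 q2]. unfold dist1; simpl. intros H.
  assert (A1 := Rabs_pos (p1 - q1)). assert (A2 := Rabs_pos (p2 - q2)).
  assert (E1 : Rabs (p1 - q1) = 0) by lra. assert (E2 : Rabs (p2 - q2) = 0) by lra.
  apply Rabs_eq_0, Rminus_diag_uniq in E1. apply Rabs_eq_0, Rminus_diag_uniq in E2.
  subst. reflexivity.
Qed.

Lemma geometric_small C eps : 0 < eps ->
  exists N, forall n, (N <= n)%nat -> C * (1/2)^n < eps.
Proof.
  intros He. assert (HC := Rabs_pos C).
  assert (Hy : 0 < eps / (Rabs C + 1)) by (apply Rdiv_lt_0_compat; lra).
  destruct (pow_lt_1_zero (1/2) ltac:(rewrite Rabs_right; lra) _ Hy) as [N HN].
  exists N. intros n Hn. specialize (HN n Hn).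
  assert (Hp : 0 <= (1/2)^n) by (apply pow_le; lra).
  rewrite Rabs_right in HN by lra.
  apply Rmult_lt_compat_l with (r := Rabs C + 1) in HN; [|lra].
  replace ((Rabs C + 1) * (eps / (Rabs C + 1))) with eps in HN by (field; lra).
  assert (C <= Rabs C) by apply Rle_abs. nra.
Qed.

Lemma le_0_of_le_geometric C x : (forall n, x <= C * (1/2)^n) -> x <= 0.
Proof.
  intros H. apply Rnot_lt_le. intros Hx.
  destruct (geometric_small C x Hx) as [N HN].
  specialize (H N). specialize (HN N (le_n N)). lra.
Qed.

Lemma geometric_cauchy_limit (s : nat -> R * R) C :
  (forall n m, (n <= m)%nat -> dist1 (s m) (s n) <= C * (1/2)^n) ->
  exists l, forall n, dist1 l (s n) <= C * (1/2)^n.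
Proof.
  intros Hs.
  assert (Hcau : forall f : R * R -> R, (forall p q, Rabs (f p - f q) <= dist1 p q) ->
    Cauchy_crit (fun n => f (s n))).
  { intros f Hf eps He. destruct (geometric_small C eps He) as [N HN].
    exists N. intros n m Hn Hm. unfold Rdist.
    destruct (Nat.le_ge_cases n m) as [h|h].
    - rewrite Rabs_minus_sym. eapply Rle_lt_trans; [apply Hf|].
      eapply Rle_lt_trans; [apply Hs, h|apply HN, Hn].
    - eapply Rle_lt_trans; [apply Hf|].
      eapply Rle_lt_trans; [apply Hs, h|apply HN, Hm]. }
  destruct (Rcomplete.R_complete _ (Hcau fst ltac:(intros p q; unfold dist1;
    generalize (Rabs_pos (snd p - snd q)); lra))) as [l1 Hl1].
  destruct (Rcomplete.R_complete _ (Hcau snd ltac:(intros p q; unfold dist1;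
    generalize (Rabs_pos (fst p - fst q)); lra))) as [l2 Hl2].
  exists (l1, l2). intros n. apply Rle_plus_epsilon. intros eps He.
  destruct (Hl1 (eps / 2)) as [N1 HN1]; [lra|].
  destruct (Hl2 (eps / 2)) as [N2 HN2]; [lra|].
  set (m := Nat.max n (Nat.max N1 N2)).
  specialize (HN1 m ltac:(lia)). specialize (HN2 m ltac:(lia)). unfold Rdist in HN1, HN2.
  assert (Hm := Hs n m ltac:(lia)).
  eapply Rle_trans; [apply (dist1_triangle _ (s m))|].
  unfold dist1 at 1; simpl.
  rewrite (Rabs_minus_sym l1), (Rabs_minus_sym l2). lra.
Qed.

Lemma contraction_fixed_point (T : R * R -> R * R) p0 r : 0 < r ->
  (forall p q, dist1 p p0 < r -> dist1 q p0 < r -> dist1 (T p) (T q) <= dist1 p q / 2) ->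
  dist1 (T p0) p0 <= r / 4 ->
  exists l, dist1 l p0 <= r / 2 /\ T l = l.
Proof.
  intros Hr Hc H0.
  set (s := fun n => Nat.iter n T p0).
  assert (Hs : forall n, s (S n) = T (s n)) by reflexivity.
  assert (Hp : forall n, 0 <= (1/2)^n) by (intros; apply pow_le; lra).
  assert (Hball : forall n, dist1 (s n) p0 <= r / 2).
  { induction n as [|n IH].
    - simpl. rewrite dist1_refl. lra.
    - rewrite Hs. eapply Rle_trans; [apply (dist1_triangle _ (T p0))|].
      assert (dist1 (T (s n)) (T p0) <= dist1 (s n) p0 / 2) by (apply Hc; rewrite ?dist1_refl; lra).
      lra. }
  assert (Hstep : forall n, dist1 (s (S n)) (s n) <= r / 4 * (1/2)^n).
  { induction n as [|n IH].
    - simpl. lra.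
    - rewrite (Hs (S n)), (Hs n). eapply Rle_trans.
      + apply Hc; [rewrite <- Hs|]; generalize (Hball (S n)) (Hball n); lra.
      + rewrite <- Hs. simpl pow. lra. }
  assert (Htail : forall k n,
    dist1 (s (n + k)%nat) (s n) <= r / 2 * (1/2)^n - r / 2 * (1/2)^(n + k)).
  { induction k as [|k IH]; intros n.
    - rewrite Nat.add_0_r, dist1_refl. lra.
    - replace (n + S k)%nat with (S (n + k)) by lia.
      eapply Rle_trans; [apply (dist1_triangle _ (s (n + k)%nat))|].
      generalize (Hstep (n + k)%nat) (IH n). simpl pow. lra. }
  destruct (geometric_cauchy_limit s (r / 2)) as [l Hl].
  { intros n m Hnm. replace m with (n + (m - n))%nat by lia.
    generalize (Htail (m - n)%nat n) (Hp (n + (m - n))%nat). nra. }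
  assert (Hl0 : dist1 l p0 <= r / 2).
  { enough (dist1 l p0 - r / 2 <= 0) by lra. apply (le_0_of_le_geometric (r / 2)). intros n.
    generalize (dist1_triangle l (s n) p0) (Hl n) (Hball n). lra. }
  exists l. split; [exact Hl0|]. apply dist1_le_0, (le_0_of_le_geometric (r / 2)). intros n.
  eapply Rle_trans; [apply (dist1_triangle _ (T (s n)))|].
  assert (dist1 (T l) (T (s n)) <= dist1 l (s n) / 2) by (apply Hc; generalize (Hball n); lra).
  generalize (Hl (S n)) (Hl n). rewrite Hs, dist1_sym. simpl pow. lra.
Qed.

(** * The inverse function theorem *)

Definition cramer1 a b c d w1 w2 : R := (d * w1 - b * w2) / (a * d - b * c).
Definition cramer2 a b c d w1 w2 : R := (a * w2 - c * w1) / (a * d - b * c).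

Lemma cramer_affine a b c d p q e1 e2 : a * d - b * c <> 0 ->
  cramer1 a b c d (a * p + b * q + e1) (c * p + d * q + e2) = p + cramer1 a b c d e1 e2 /\
  cramer2 a b c d (a * p + b * q + e1) (c * p + d * q + e2) = q + cramer2 a b c d e1 e2.
Proof. intros HJ. unfold cramer1, cramer2. split; field; exact HJ. Qed.

Lemma cramer_bound a b c d w1 w2 : a * d - b * c <> 0 ->
  Rabs (cramer1 a b c d w1 w2) + Rabs (cramer2 a b c d w1 w2) <=
  (Rabs a + Rabs b + Rabs c + Rabs d) / Rabs (a * d - b * c) * (Rabs w1 + Rabs w2).
Proof.
  intros HJ. unfold cramer1, cramer2. set (J := a * d - b * c) in *.
  assert (HJp : 0 < Rabs J) by (apply Rabs_pos_lt; exact HJ).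
  rewrite !Rabs_div by exact HJ. unfold Rdiv. rewrite <- Rmult_plus_distr_r.
  rewrite (Rmult_comm (_ + _ + _ + _)), Rmult_assoc, (Rmult_comm (/ Rabs J)).
  apply Rmult_le_compat_r; [left; apply Rinv_0_lt_compat; exact HJp|].
  unfold Rminus. eapply Rle_trans; [apply Rplus_le_compat; apply Rabs_triang|].
  rewrite !Rabs_Ropp, !Rabs_mult.
  generalize (Rabs_pos a) (Rabs_pos b) (Rabs_pos c) (Rabs_pos d) (Rabs_pos w1) (Rabs_pos w2).
  nra.
Qed.

Lemma Rabs_lin_le k1 k2 x y m :
  Rabs k1 <= m -> Rabs k2 <= m -> Rabs (k1 * x + k2 * y) <= m * (Rabs x + Rabs y).
Proof.
  intros H1 H2. eapply Rle_trans; [apply Rabs_triang|]. rewrite !Rabs_mult.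
  generalize (Rabs_pos x) (Rabs_pos y). nra.
Qed.

Lemma cramer_solution a b c d w1 w2 : a * d - b * c <> 0 ->
  w1 = a * cramer1 a b c d w1 w2 + b * cramer2 a b c d w1 w2 /\
  w2 = c * cramer1 a b c d w1 w2 + d * cramer2 a b c d w1 w2.
Proof. intros HJ. unfold cramer1, cramer2. split; field; exact HJ. Qed.

Definition jac (X Z : R -> R -> R) u v : R := d1 X u v * d2 Z u v - d2 X u v * d1 Z u v.

Section NewtonMap.

Variables (X Z : R -> R -> R) (u0 v0 r a b c d eta : R).

Hypothesis control : forall u v, square u0 v0 r u v ->
  ex_derive (fun t => X t v) u /\ ex_derive (fun t => X u t) v /\
  ex_derive (fun t => Z t v) u /\ ex_derive (fun t => Z u t) v /\
  Rabs (d1 X u v - a) <= eta /\ Rabs (d2 X u v - b) <= eta /\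
  Rabs (d1 Z u v - c) <= eta /\ Rabs (d2 Z u v - d) <= eta.
Hypothesis det_nonzero : a * d - b * c <> 0.
Hypothesis eta_small : (Rabs a + Rabs b + Rabs c + Rabs d) * eta <= Rabs (a * d - b * c) / 4.

Let S := Rabs a + Rabs b + Rabs c + Rabs d.
Let J := a * d - b * c.

Lemma Rabs_det_pos : 0 < Rabs J.
Proof. apply Rabs_pos_lt. exact det_nonzero. Qed.

Lemma coef_sum_nonneg : 0 <= S.
Proof. unfold S. generalize (Rabs_pos a) (Rabs_pos b) (Rabs_pos c) (Rabs_pos d). lra. Qed.

(* Newton's map [p |-> p - A^-1 ((X, Z) p - w)], with [A] frozen near the Jacobian, contracts. *)
Lemma newton_step_contraction u v u' v' : square u0 v0 r u v -> square u0 v0 r u' v' ->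
  Rabs (u - u' - cramer1 a b c d (X u v - X u' v') (Z u v - Z u' v')) +
  Rabs (v - v' - cramer2 a b c d (X u v - X u' v') (Z u v - Z u' v'))
  <= (Rabs (u - u') + Rabs (v - v')) / 2.
Proof.
  intros Huv Huv'.
  destruct (mean_value_square X u0 v0 r) with u v u' v' as [x1 [y1 [Hx1 [Hy1 EX]]]]; auto.
  { intros p q Hpq. destruct (control p q Hpq) as [A [B _]]. auto. }
  destruct (mean_value_square Z u0 v0 r) with u v u' v' as [x2 [y2 [Hx2 [Hy2 EZ]]]]; auto.
  { intros p q Hpq. destruct (control p q Hpq) as [_ [_ [A [B _]]]]. auto. }
  destruct (control x1 v Hx1) as [_ [_ [_ [_ [B1 _]]]]].
  destruct (control u' y1 Hy1) as [_ [_ [_ [_ [_ [B2 _]]]]]].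
  destruct (control x2 v Hx2) as [_ [_ [_ [_ [_ [_ [B3 _]]]]]]].
  destruct (control u' y2 Hy2) as [_ [_ [_ [_ [_ [_ [_ B4]]]]]]].
  set (du := u - u') in *. set (dv := v - v') in *.
  set (e1 := (d1 X x1 v - a) * du + (d2 X u' y1 - b) * dv).
  set (e2 := (d1 Z x2 v - c) * du + (d2 Z u' y2 - d) * dv).
  assert (EX' : X u v - X u' v' = a * du + b * dv + e1) by (rewrite EX; unfold e1; ring).
  assert (EZ' : Z u v - Z u' v' = c * du + d * dv + e2) by (rewrite EZ; unfold e2; ring).
  rewrite EX', EZ'. destruct (cramer_affine a b c d du dv e1 e2 det_nonzero) as [C1 C2].
  rewrite C1, C2.
  replace (du - (du + cramer1 a b c d e1 e2)) with (- cramer1 a b c d e1 e2) by ring.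
  replace (dv - (dv + cramer2 a b c d e1 e2)) with (- cramer2 a b c d e1 e2) by ring.
  rewrite !Rabs_Ropp.
  assert (He1 : Rabs e1 <= eta * (Rabs du + Rabs dv)) by (apply Rabs_lin_le; assumption).
  assert (He2 : Rabs e2 <= eta * (Rabs du + Rabs dv)) by (apply Rabs_lin_le; assumption).
  assert (HJ := Rabs_det_pos). assert (HS := coef_sum_nonneg).
  assert (Ht := Rabs_pos du). assert (Ht' := Rabs_pos dv).
  eapply Rle_trans; [apply cramer_bound; exact det_nonzero|]. fold S J.
  apply Rle_trans with (2 * (S * eta) * (Rabs du + Rabs dv) / Rabs J).
  { replace (2 * (S * eta) * (Rabs du + Rabs dv) / Rabs J)
      with (S / Rabs J * (2 * eta * (Rabs du + Rabs dv))) by (field; lra).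
    apply Rmult_le_compat_l; [apply Rdiv_le_0_compat; lra|lra]. }
  apply Rle_trans with (2 * (Rabs J / 4) * (Rabs du + Rabs dv) / Rabs J); [|right; field; lra].
  unfold Rdiv. apply Rmult_le_compat_r; [left; apply Rinv_0_lt_compat; exact HJ|].
  unfold S, J in *. nra.
Qed.

Lemma newton_map_surjective x z : 0 < r ->
  Rabs (x - X u0 v0) + Rabs (z - Z u0 v0) <= r * Rabs J / (4 * (S + 1)) ->
  exists u v, Rabs (u - u0) + Rabs (v - v0) <= r / 2 /\ X u v = x /\ Z u v = z.
Proof.
  intros Hr Hxz. assert (HJ := Rabs_det_pos). assert (HS := coef_sum_nonneg).
  set (T := fun p : R * R =>
    (fst p - cramer1 a b c d (X (fst p) (snd p) - x) (Z (fst p) (snd p) - z),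
     snd p - cramer2 a b c d (X (fst p) (snd p) - x) (Z (fst p) (snd p) - z))).
  assert (Hsq : forall p, dist1 p (u0, v0) < r -> square u0 v0 r (fst p) (snd p)).
  { intros p. unfold dist1, square; simpl.
    generalize (Rabs_pos (fst p - u0)) (Rabs_pos (snd p - v0)). lra. }
  destruct (contraction_fixed_point T (u0, v0) r Hr) as [[l1 l2] [Hl Fix]].
  - intros [u v] [u' v'] Hp Hq. unfold dist1, T; simpl.
    replace (u - cramer1 a b c d (X u v - x) (Z u v - z)
             - (u' - cramer1 a b c d (X u' v' - x) (Z u' v' - z)))
      with (u - u' - cramer1 a b c d (X u v - X u' v') (Z u v - Z u' v'))
      by (unfold cramer1; field; exact det_nonzero).
    replace (v - cramer2 a b c d (X u v - x) (Z u v - z)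
             - (v' - cramer2 a b c d (X u' v' - x) (Z u' v' - z)))
      with (v - v' - cramer2 a b c d (X u v - X u' v') (Z u v - Z u' v'))
      by (unfold cramer2; field; exact det_nonzero).
    apply newton_step_contraction; [apply (Hsq (u, v))|apply (Hsq (u', v'))]; assumption.
  - unfold dist1, T; simpl.
    replace (u0 - cramer1 a b c d (X u0 v0 - x) (Z u0 v0 - z) - u0)
      with (- cramer1 a b c d (X u0 v0 - x) (Z u0 v0 - z)) by ring.
    replace (v0 - cramer2 a b c d (X u0 v0 - x) (Z u0 v0 - z) - v0)
      with (- cramer2 a b c d (X u0 v0 - x) (Z u0 v0 - z)) by ring.
    rewrite !Rabs_Ropp. eapply Rle_trans; [apply cramer_bound; exact det_nonzero|]. fold S J.
    rewrite (Rabs_minus_sym (X u0 v0)), (Rabs_minus_sym (Z u0 v0)).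
    apply Rle_trans with (S / Rabs J * (r * Rabs J / (4 * (S + 1)))).
    { apply Rmult_le_compat_l; [apply Rdiv_le_0_compat|]; lra. }
    replace (S / Rabs J * (r * Rabs J / (4 * (S + 1)))) with (r / 4 * (S / (S + 1)))
      by (field; lra).
    rewrite <- (Rmult_1_r (r / 4)) at 2.
    apply Rmult_le_compat_l; [lra|]. apply (Rdiv_le_1 S (S + 1)); lra.
  - exists l1, l2. unfold dist1 in Hl; simpl in Hl. split; [exact Hl|].
    injection Fix as F1 F2.
    assert (C1 : cramer1 a b c d (X l1 l2 - x) (Z l1 l2 - z) = 0) by lra.
    assert (C2 : cramer2 a b c d (X l1 l2 - x) (Z l1 l2 - z) = 0) by lra.
    destruct (cramer_solution a b c d (X l1 l2 - x) (Z l1 l2 - z) det_nonzero) as [E1 E2].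
    rewrite C1, C2 in E1, E2. lra.
Qed.

Lemma newton_map_expanding u v u' v' : square u0 v0 r u v -> square u0 v0 r u' v' ->
  Rabs (u - u') + Rabs (v - v') <=
  2 * S / Rabs J * (Rabs (X u v - X u' v') + Rabs (Z u v - Z u' v')).
Proof.
  intros Huv Huv'. assert (HJ := Rabs_det_pos). assert (HS := coef_sum_nonneg).
  assert (Hc := newton_step_contraction u v u' v' Huv Huv').
  assert (Hb := cramer_bound a b c d (X u v - X u' v') (Z u v - Z u' v') det_nonzero).
  fold S J in Hb.
  set (c1 := cramer1 a b c d (X u v - X u' v') (Z u v - Z u' v')) in *.
  set (c2 := cramer2 a b c d (X u v - X u' v') (Z u v - Z u' v')) in *.
  generalize (Rabs_triang (u - u' - c1) c1) (Rabs_triang (v - v' - c2) c2).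
  replace (u - u' - c1 + c1) with (u - u') by ring.
  replace (v - v' - c2 + c2) with (v - v') by ring.
  replace (2 * S / Rabs J) with (2 * (S / Rabs J)) by (field; lra). lra.
Qed.

End NewtonMap.

Lemma C1_control_square (X Z : R -> R -> R) (U : R -> R -> Prop) u0 v0 eta :
  open2 U -> Ck 1 U X -> Ck 1 U Z -> U u0 v0 -> jac X Z u0 v0 <> 0 -> 0 < eta ->
  exists r, 0 < r /\ (forall u v, square u0 v0 r u v -> U u v /\ jac X Z u v <> 0) /\
    forall u v, square u0 v0 r u v ->
    ex_derive (fun t => X t v) u /\ ex_derive (fun t => X u t) v /\
    ex_derive (fun t => Z t v) u /\ ex_derive (fun t => Z u t) v /\
    Rabs (d1 X u v - d1 X u0 v0) <= eta /\ Rabs (d2 X u v - d2 X u0 v0) <= eta /\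
    Rabs (d1 Z u v - d1 Z u0 v0) <= eta /\ Rabs (d2 Z u v - d2 Z u0 v0) <= eta.
Proof.
  intros HU HX HZ H0 HJ Heta.
  destruct (Ck1_C1_at U X u0 v0 HX H0) as [_ _ _ cX1 cX2].
  destruct (Ck1_C1_at U Z u0 v0 HZ H0) as [_ _ _ cZ1 cZ2].
  assert (HJl : locally_2d (fun u v => jac X Z u v <> 0) u0 v0).
  { apply continuity_2d_pt_neq_0; [|exact HJ].
    unfold jac. apply continuity_2d_pt_minus; apply continuity_2d_pt_mult; assumption. }
  destruct (locally_2d_square _ _ _ (locally_2d_and _ _ _ _
    (locally_2d_and _ _ _ _ (open2_locally_2d U u0 v0 HU H0) HJl)
    (locally_2d_and _ _ _ _ (cX1 (mkposreal _ Heta))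
    (locally_2d_and _ _ _ _ (cX2 (mkposreal _ Heta))
    (locally_2d_and _ _ _ _ (cZ1 (mkposreal _ Heta)) (cZ2 (mkposreal _ Heta))))))) as [r [Hr Hsq]].
  exists r. split; [exact Hr|]. split; [intros u v Huv; exact (proj1 (Hsq u v Huv))|].
  intros u v Huv. destruct (Hsq u v Huv) as [[HUuv HJuv] [B1 [B2 [B3 B4]]]].
  simpl in B1, B2, B3, B4.
  destruct (Ck1_C1_at U X u v HX HUuv) as [_ E1 E2 _ _].
  destruct (Ck1_C1_at U Z u v HZ HUuv) as [_ E3 E4 _ _].
  repeat split; auto; lra.
Qed.

Lemma open2_preimage (B D : R -> R -> Prop) (X Z : R -> R -> R) :
  open2 B -> open2 D ->
  (forall u v, B u v -> continuity_2d_pt X u v /\ continuity_2d_pt Z u v) ->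
  open2 (fun u v => B u v /\ D (X u v) (Z u v)).
Proof.
  intros HB HD HC. apply open2_of_locally_2d. intros u v [Huv HXZ].
  destruct (HC u v Huv) as [cX cZ].
  destruct (open2_locally_2d D _ _ HD HXZ) as [e He].
  apply locally_2d_and; [apply (locally_2d_of_open2 B); auto|].
  apply locally_2d_impl
    with (fun u' v' => Rabs (X u' v' - X u v) < e /\ Rabs (Z u' v' - Z u v) < e).
  - apply locally_2d_forall. intros u' v' [h1 h2]. apply He; assumption.
  - apply locally_2d_and; [apply cX|apply cZ].
Qed.

Definition local_inverse (X Z : R -> R -> R) (W D : R -> R -> Prop) (G1 G2 : R -> R -> R) : Prop :=
  (forall x z, D x z ->
     W (G1 x z) (G2 x z) /\ X (G1 x z) (G2 x z) = x /\ Z (G1 x z) (G2 x z) = z) /\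
  (forall u v, W u v -> D (X u v) (Z u v) /\ G1 (X u v) (Z u v) = u /\ G2 (X u v) (Z u v) = v).

Lemma lipschitz_inverse_of_expanding (X Z : R -> R -> R) (W D : R -> R -> Prop) K :
  (forall u v, W u v -> D (X u v) (Z u v)) ->
  (forall x z, D x z -> exists u v, W u v /\ X u v = x /\ Z u v = z) ->
  (forall u v u' v', W u v -> W u' v' ->
     Rabs (u - u') + Rabs (v - v') <= K * (Rabs (X u v - X u' v') + Rabs (Z u v - Z u' v'))) ->
  exists G1 G2, local_inverse X Z W D G1 G2 /\
    forall x z x' z', D x z -> D x' z' ->
      Rabs (G1 x z - G1 x' z') + Rabs (G2 x z - G2 x' z') <= K * (Rabs (x - x') + Rabs (z - z')).
Proof.
  intros HWD Hsurj Hexp.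
  set (G := fun x z => epsilon (inhabits (0, 0))
    (fun p => W (fst p) (snd p) /\ X (fst p) (snd p) = x /\ Z (fst p) (snd p) = z)).
  assert (HG : forall x z, D x z -> W (fst (G x z)) (snd (G x z)) /\
      X (fst (G x z)) (snd (G x z)) = x /\ Z (fst (G x z)) (snd (G x z)) = z).
  { intros x z Hxz. apply (epsilon_spec (inhabits (0, 0))).
    destruct (Hsurj x z Hxz) as (u & v & H). exists (u, v). exact H. }
  exists (fun x z => fst (G x z)), (fun x z => snd (G x z)). split; [split|].
  - exact HG.
  - intros u v Huv. assert (HD := HWD u v Huv). split; [exact HD|].
    destruct (HG _ _ HD) as (Hw & E1 & E2).
    assert (Hl := Hexp _ _ _ _ Hw Huv).
    rewrite E1, E2, !Rminus_eq_0, Rabs_R0, Rplus_0_r, Rmult_0_r in Hl.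
    generalize (Rabs_pos (fst (G (X u v) (Z u v)) - u)) (Rabs_pos (snd (G (X u v) (Z u v)) - v)).
    intros P1 P2. split; apply Rminus_diag_uniq, Rabs_eq_0; lra.
  - intros x z x' z' Hxz Hxz'.
    destruct (HG _ _ Hxz) as (Hw & E1 & E2). destruct (HG _ _ Hxz') as (Hw' & E1' & E2').
    assert (Hl := Hexp _ _ _ _ Hw Hw'). rewrite E1, E2, E1', E2' in Hl. exact Hl.
Qed.

Lemma inverse_function_theorem (X Z : R -> R -> R) (U : R -> R -> Prop) u0 v0 :
  open2 U -> Ck 1 U X -> Ck 1 U Z -> U u0 v0 -> jac X Z u0 v0 <> 0 ->
  exists W D G1 G2 K, open2 W /\ open2 D /\ W u0 v0 /\
    (forall u v, W u v -> U u v /\ jac X Z u v <> 0) /\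
    local_inverse X Z W D G1 G2 /\ 0 <= K /\
    (forall x z x' z', D x z -> D x' z' ->
       Rabs (G1 x z - G1 x' z') + Rabs (G2 x z - G2 x' z') <= K * (Rabs (x - x') + Rabs (z - z'))).
Proof.
  intros HU HX HZ H0 HJ.
  set (a := d1 X u0 v0). set (b := d2 X u0 v0). set (c := d1 Z u0 v0). set (d := d2 Z u0 v0).
  set (S := Rabs a + Rabs b + Rabs c + Rabs d). set (J := a * d - b * c).
  assert (HJ' : J <> 0) by exact HJ.
  assert (HJp : 0 < Rabs J) by (apply Rabs_pos_lt; exact HJ').
  assert (HS : 0 <= S)
    by (unfold S; generalize (Rabs_pos a) (Rabs_pos b) (Rabs_pos c) (Rabs_pos d); lra).
  set (eta := Rabs J / (4 * (S + 1))).
  assert (Heta : 0 < eta) by (apply Rdiv_lt_0_compat; lra).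
  assert (HSeta : S * eta <= Rabs J / 4).
  { unfold eta. apply (Rmult_le_reg_r (4 * (S + 1))); [lra|]. field_simplify; [|lra]. nra. }
  destruct (C1_control_square X Z U u0 v0 eta HU HX HZ H0 HJ Heta) as [r [Hr [Hsq control]]].
  set (dl := r * Rabs J / (8 * (S + 1))).
  assert (Hdl : 0 < dl) by (apply Rdiv_lt_0_compat; [apply Rmult_lt_0_compat|]; lra).
  set (D := square (X u0 v0) (Z u0 v0) dl).
  set (W := fun u v => square u0 v0 r u v /\ D (X u v) (Z u v)).
  destruct (lipschitz_inverse_of_expanding X Z W D (2 * S / Rabs J)) as (G1 & G2 & Hinv & HL).
  - intros u v [_ HD]. exact HD.
  - intros x z Hxz.
    destruct (newton_map_surjective X Z u0 v0 r a b c d eta control HJ' HSeta x z Hr)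
      as (u & v & Huv & Ex & Ez).
    { destruct Hxz as [Hx Hz]. fold S J.
      replace (r * Rabs J / (4 * (S + 1))) with (2 * dl) by (unfold dl; field; lra). lra. }
    exists u, v. split; [split|split; assumption].
    + unfold square. generalize (Rabs_pos (u - u0)) (Rabs_pos (v - v0)). lra.
    + rewrite Ex, Ez. exact Hxz.
  - intros u v u' v' [Hw _] [Hw' _].
    exact (newton_map_expanding X Z u0 v0 r a b c d eta control HJ' HSeta u v u' v' Hw Hw').
  - exists W, D, G1, G2, (2 * S / Rabs J). split.
    { apply open2_preimage; [apply open2_square|apply open2_square|].
      intros u v Huv. destruct (Hsq u v Huv) as [HUuv _].
      destruct (Ck1_C1_at U X u v HX HUuv), (Ck1_C1_at U Z u v HZ HUuv). auto. }
    split; [apply open2_square|]. split; [split; apply square_center; assumption|].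
    split; [intros u v [Huv _]; exact (Hsq u v Huv)|].
    split; [exact Hinv|]. split; [apply Rdiv_le_0_compat; lra|exact HL].
Qed.

(** * Differentiability of the inverse *)

Lemma cramer_difference_quotient a b c d w1 w2 D1 D2 h B : a * d - b * c <> 0 -> h <> 0 ->
  Rabs (w1 * h - (a * D1 + b * D2)) <= B * Rabs h ->
  Rabs (w2 * h - (c * D1 + d * D2)) <= B * Rabs h ->
  Rabs (D1 / h - cramer1 a b c d w1 w2) + Rabs (D2 / h - cramer2 a b c d w1 w2) <=
  (Rabs a + Rabs b + Rabs c + Rabs d) / Rabs (a * d - b * c) * (2 * B).
Proof.
  intros HJ Hh H1 H2.
  set (e1 := w1 * h - (a * D1 + b * D2)) in *. set (e2 := w2 * h - (c * D1 + d * D2)) in *.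
  replace (D1 / h - cramer1 a b c d w1 w2) with (- cramer1 a b c d (e1 / h) (e2 / h))
    by (unfold e1, e2, cramer1; field; auto).
  replace (D2 / h - cramer2 a b c d w1 w2) with (- cramer2 a b c d (e1 / h) (e2 / h))
    by (unfold e1, e2, cramer2; field; auto).
  rewrite !Rabs_Ropp. eapply Rle_trans; [apply cramer_bound; exact HJ|].
  apply Rmult_le_compat_l.
  - apply Rdiv_le_0_compat; [|apply Rabs_pos_lt, HJ].
    generalize (Rabs_pos a) (Rabs_pos b) (Rabs_pos c) (Rabs_pos d). lra.
  - assert (Hhp : 0 < Rabs h) by (apply Rabs_pos_lt, Hh).
    rewrite !Rabs_div by exact Hh.
    apply Rmult_le_reg_r with (Rabs h); [exact Hhp|].
    replace ((Rabs e1 / Rabs h + Rabs e2 / Rabs h) * Rabs h) with (Rabs e1 + Rabs e2)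
      by (field; lra).
    lra.
Qed.

Section InversePath.

Variables (X Z : R -> R -> R) (g1 g2 : R -> R) (t0 a b c d w1 w2 K : R).
Hypotheses (HX : differentiable_pt_lim X (g1 t0) (g2 t0) a b)
  (HZ : differentiable_pt_lim Z (g1 t0) (g2 t0) c d) (HJ : a * d - b * c <> 0) (HK : 0 <= K).
Hypothesis path : locally t0 (fun t =>
  X (g1 t) (g2 t) - X (g1 t0) (g2 t0) = w1 * (t - t0) /\
  Z (g1 t) (g2 t) - Z (g1 t0) (g2 t0) = w2 * (t - t0) /\
  Rabs (g1 t - g1 t0) + Rabs (g2 t - g2 t0) <= K * Rabs (t - t0)).

(* The a priori Lipschitz bound on [g] is what makes the linearization errors negligible. *)
Lemma inverse_path_difference_quotients eps : 0 < eps ->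
  exists del : posreal, forall h, h <> 0 -> Rabs h < del ->
    Rabs ((g1 (t0 + h) - g1 t0) / h - cramer1 a b c d w1 w2) +
    Rabs ((g2 (t0 + h) - g2 t0) / h - cramer2 a b c d w1 w2) < eps.
Proof.
  intros Heps. destruct path as [d0 Hloc].
  set (M := (Rabs a + Rabs b + Rabs c + Rabs d) / Rabs (a * d - b * c)).
  assert (HM : 0 <= M).
  { apply Rdiv_le_0_compat; [|apply Rabs_pos_lt, HJ].
    generalize (Rabs_pos a) (Rabs_pos b) (Rabs_pos c) (Rabs_pos d). lra. }
  set (e := eps / (4 * (M + 1) * (K + 1))).
  assert (He : 0 < e) by (unfold e; apply Rdiv_lt_0_compat; [lra|]; nra).
  destruct (HX (mkposreal _ He)) as [dX HdX]. destruct (HZ (mkposreal _ He)) as [dZ HdZ].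
  simpl in HdX, HdZ. set (m := Rmin dX dZ).
  assert (Hm : 0 < m) by (apply Rmin_pos; apply cond_pos).
  assert (Hdel : 0 < Rmin d0 (m / (K + 1)))
    by (apply Rmin_pos; [apply cond_pos|apply Rdiv_lt_0_compat; lra]).
  exists (mkposreal _ Hdel). simpl. intros h Hh Hhd.
  assert (Hh0 : Rabs (t0 + h - t0) < d0).
  { replace (t0 + h - t0) with h by ring. eapply Rlt_le_trans; [exact Hhd|apply Rmin_l]. }
  assert (Hh1 : (K + 1) * Rabs h < m).
  { apply Rmult_lt_reg_r with (/ (K + 1)); [apply Rinv_0_lt_compat; lra|].
    replace ((K + 1) * Rabs h * / (K + 1)) with (Rabs h) by (field; lra).
    eapply Rlt_le_trans; [exact Hhd|apply Rmin_r]. }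
  destruct (Hloc (t0 + h) Hh0) as [EX [EZ EB]].
  replace (t0 + h - t0) with h in EX, EZ, EB by ring.
  set (D1 := g1 (t0 + h) - g1 t0) in *. set (D2 := g2 (t0 + h) - g2 t0) in *.
  assert (Hmax : Rmax (Rabs D1) (Rabs D2) <= K * Rabs h)
    by (apply Rmax_lub; generalize (Rabs_pos D1) (Rabs_pos D2); lra).
  generalize (Rmin_l dX dZ) (Rmin_r dX dZ) (Rabs_pos D1) (Rabs_pos D2) (Rabs_pos h).
  fold m. intros Hmx Hmz P1 P2 P3.
  assert (BX := HdX (g1 (t0 + h)) (g2 (t0 + h)) ltac:(fold D1; nra) ltac:(fold D2; nra)).
  assert (BZ := HdZ (g1 (t0 + h)) (g2 (t0 + h)) ltac:(fold D1; nra) ltac:(fold D2; nra)).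
  fold D1 D2 in BX, BZ. rewrite EX in BX. rewrite EZ in BZ.
  eapply Rle_lt_trans.
  { apply (cramer_difference_quotient _ _ _ _ _ _ _ _ _ (e * K)); [exact HJ|exact Hh| |]; nra. }
  fold M. replace (M * (2 * (e * K))) with (eps * (M * K) / (2 * (M + 1) * (K + 1)))
    by (unfold e; field; lra).
  apply Rmult_lt_reg_r with (2 * (M + 1) * (K + 1)); [nra|].
  replace (eps * (M * K) / (2 * (M + 1) * (K + 1)) * (2 * (M + 1) * (K + 1)))
    with (eps * (M * K)) by (field; nra).
  apply Rmult_lt_compat_l; [exact Heps|nra].
Qed.

Lemma is_derive_inverse_path :
  is_derive g1 t0 (cramer1 a b c d w1 w2) /\ is_derive g2 t0 (cramer2 a b c d w1 w2).
Proof.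
  split; apply is_derive_Reals; intros eps Heps;
    destruct (inverse_path_difference_quotients eps Heps) as [del Hdel];
    exists del; intros h Hh Hhd; specialize (Hdel h Hh Hhd);
    generalize (Rabs_pos ((g1 (t0 + h) - g1 t0) / h - cramer1 a b c d w1 w2))
      (Rabs_pos ((g2 (t0 + h) - g2 t0) / h - cramer2 a b c d w1 w2)); lra.
Qed.

End InversePath.

(** * The Born-Infeld identity *)

Definition det_ratio (A B C D E F G H : R -> R -> R) u v : R :=
  (A u v * B u v - C u v * D u v) / (E u v * F u v - G u v * H u v).

(* quotient rule for [det_ratio], [Dop f] standing for the derivative of [f] *)
Definition det_ratio_deriv (Dop : (R -> R -> R) -> R -> R -> R)
  (A B C D E F G H : R -> R -> R) u v : R :=
  ((Dop A u v * B u v + A u v * Dop B u v - (Dop C u v * D u v + C u v * Dop D u v))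
     * (E u v * F u v - G u v * H u v)
   - (A u v * B u v - C u v * D u v)
     * (Dop E u v * F u v + E u v * Dop F u v - (Dop G u v * H u v + G u v * Dop H u v)))
  / (E u v * F u v - G u v * H u v) ^ 2.

Lemma is_derive_det_ratio_comp (Dop : (R -> R -> R) -> R -> R -> R) (P : (R -> R -> R) -> Prop)
  (A B C D E F G H : R -> R -> R) (g1 g2 : R -> R) t0 :
  (forall f, P f -> is_derive (fun t => f (g1 t) (g2 t)) t0 (Dop f (g1 t0) (g2 t0))) ->
  P A -> P B -> P C -> P D -> P E -> P F -> P G -> P H ->
  E (g1 t0) (g2 t0) * F (g1 t0) (g2 t0) - G (g1 t0) (g2 t0) * H (g1 t0) (g2 t0) <> 0 ->
  is_derive (fun t => det_ratio A B C D E F G H (g1 t) (g2 t)) t0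
    (det_ratio_deriv Dop A B C D E F G H (g1 t0) (g2 t0)).
Proof.
  intros HD hA hB hC hD hE hF hG hH hJ.
  assert (Hmul : forall f k, P f -> P k -> is_derive (fun t => f (g1 t) (g2 t) * k (g1 t) (g2 t)) t0
    (Dop f (g1 t0) (g2 t0) * k (g1 t0) (g2 t0) + f (g1 t0) (g2 t0) * Dop k (g1 t0) (g2 t0))).
  { intros f k Hf Hk. apply (is_derive_mult (fun t => f (g1 t) (g2 t)) (fun t => k (g1 t) (g2 t)));
      [apply HD, Hf|apply HD, Hk|intros; apply Rmult_comm]. }
  exact (is_derive_div _ _ t0 _ _ (is_derive_minus _ _ t0 _ _ (Hmul A B hA hB) (Hmul C D hC hD))
    (is_derive_minus _ _ t0 _ _ (Hmul E F hE hF) (Hmul G H hG hH)) hJ).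
Qed.

Ltac continuity_2d_arith := repeat first
  [ apply continuity_2d_pt_plus | apply continuity_2d_pt_minus | apply continuity_2d_pt_mult
  | apply continuity_2d_pt_opp | apply continuity_2d_pt_const | assumption ].

Lemma continuity_2d_pt_det_ratio (A B C D E F G H : R -> R -> R) x y :
  continuity_2d_pt A x y -> continuity_2d_pt B x y -> continuity_2d_pt C x y ->
  continuity_2d_pt D x y -> continuity_2d_pt E x y -> continuity_2d_pt F x y ->
  continuity_2d_pt G x y -> continuity_2d_pt H x y ->
  E x y * F x y - G x y * H x y <> 0 ->
  continuity_2d_pt (det_ratio A B C D E F G H) x y.
Proof.
  intros. unfold det_ratio, Rdiv. apply continuity_2d_pt_mult; [continuity_2d_arith|].
  apply continuity_2d_pt_inv; [continuity_2d_arith|assumption].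
Qed.

Lemma continuity_2d_pt_det_ratio_deriv (Dop : (R -> R -> R) -> R -> R -> R)
  (A B C D E F G H : R -> R -> R) x y :
  continuity_2d_pt A x y -> continuity_2d_pt B x y -> continuity_2d_pt C x y ->
  continuity_2d_pt D x y -> continuity_2d_pt E x y -> continuity_2d_pt F x y ->
  continuity_2d_pt G x y -> continuity_2d_pt H x y ->
  continuity_2d_pt (Dop A) x y -> continuity_2d_pt (Dop B) x y -> continuity_2d_pt (Dop C) x y ->
  continuity_2d_pt (Dop D) x y -> continuity_2d_pt (Dop E) x y -> continuity_2d_pt (Dop F) x y ->
  continuity_2d_pt (Dop G) x y -> continuity_2d_pt (Dop H) x y ->
  E x y * F x y - G x y * H x y <> 0 ->
  continuity_2d_pt (det_ratio_deriv Dop A B C D E F G H) x y.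
Proof.
  intros. unfold det_ratio_deriv, Rdiv. simpl pow. rewrite ?Rmult_1_r.
  apply continuity_2d_pt_mult; [continuity_2d_arith|].
  apply continuity_2d_pt_inv; [continuity_2d_arith|].
  apply Rmult_integral_contrapositive; split; auto.
Qed.

(* [Dx X Z h] and [Dz X Z h] are the partial derivatives in [x] and [z] of [h] composed with
   the inverse of [(u, v) |-> (X u v, Z u v)], written in the [(u, v)] chart. *)
Definition Dx (X Z h : R -> R -> R) : R -> R -> R :=
  det_ratio (d1 h) (d2 Z) (d2 h) (d1 Z) (d1 X) (d2 Z) (d2 X) (d1 Z).
Definition Dz (X Z h : R -> R -> R) : R -> R -> R :=
  det_ratio (d2 h) (d1 X) (d1 h) (d2 X) (d1 X) (d2 Z) (d2 X) (d1 Z).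

Definition Dxx (X Z h : R -> R -> R) : R -> R -> R :=
  det_ratio_deriv (Dx X Z) (d1 h) (d2 Z) (d2 h) (d1 Z) (d1 X) (d2 Z) (d2 X) (d1 Z).
Definition Dxz (X Z h : R -> R -> R) : R -> R -> R :=
  det_ratio_deriv (Dz X Z) (d1 h) (d2 Z) (d2 h) (d1 Z) (d1 X) (d2 Z) (d2 X) (d1 Z).
Definition Dzx (X Z h : R -> R -> R) : R -> R -> R :=
  det_ratio_deriv (Dx X Z) (d2 h) (d1 X) (d1 h) (d2 X) (d1 X) (d2 Z) (d2 X) (d1 Z).
Definition Dzz (X Z h : R -> R -> R) : R -> R -> R :=
  det_ratio_deriv (Dz X Z) (d2 h) (d1 X) (d1 h) (d2 X) (d1 X) (d2 Z) (d2 X) (d1 Z).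

(* second fundamental form against the non-normalized normal [(N1, N2, N3)] *)
Definition sff_num (X Y Z A B C : R -> R -> R) u v : R :=
  lprod (A u v) (B u v) (C u v) (N1 Y Z u v) (N2 X Z u v) (N3 X Y u v).

Lemma lprod_normal (X Y Z : R -> R -> R) u v :
  lprod (N1 Y Z u v) (N2 X Z u v) (N3 X Y u v) (N1 Y Z u v) (N2 X Z u v) (N3 X Y u v) =
  - (E_ff X Y Z u v * G_ff X Y Z u v - F_ff X Y Z u v ^ 2).
Proof. unfold N1, N2, N3, E_ff, F_ff, G_ff, lprod. ring. Qed.

Lemma minimal_sff_num (X Y Z : R -> R -> R) u v :
  timelike_at X Y Z u v -> mean_curv X Y Z u v = 0 ->
  E_ff X Y Z u v * sff_num X Y Z (d2 (d2 X)) (d2 (d2 Y)) (d2 (d2 Z)) u v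
  - 2 * F_ff X Y Z u v * sff_num X Y Z (d2 (d1 X)) (d2 (d1 Y)) (d2 (d1 Z)) u v
  + G_ff X Y Z u v * sff_num X Y Z (d1 (d1 X)) (d1 (d1 Y)) (d1 (d1 Z)) u v = 0.
Proof.
  unfold timelike_at. intros Ht Hm.
  assert (Hn : 0 < nrm X Y Z u v).
  { unfold nrm. apply sqrt_lt_R0. rewrite lprod_normal, Rabs_right; lra. }
  assert (Esf : forall A B C,
    lprod (A u v) (B u v) (C u v) (n1 X Y Z u v) (n2 X Y Z u v) (n3 X Y Z u v)
    = sff_num X Y Z A B C u v / nrm X Y Z u v).
  { intros A B C. unfold n1, n2, n3, sff_num, lprod. field. lra. }
  unfold mean_curv, L_sf, M_sf, N_sf in Hm. rewrite !Esf in Hm.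
  set (Q := E_ff X Y Z u v * sff_num X Y Z (d2 (d2 X)) (d2 (d2 Y)) (d2 (d2 Z)) u v
    - 2 * F_ff X Y Z u v * sff_num X Y Z (d2 (d1 X)) (d2 (d1 Y)) (d2 (d1 Z)) u v
    + G_ff X Y Z u v * sff_num X Y Z (d1 (d1 X)) (d1 (d1 Y)) (d1 (d1 Z)) u v).
  replace Q with (2 * (E_ff X Y Z u v * G_ff X Y Z u v - F_ff X Y Z u v ^ 2) * nrm X Y Z u v *
    ((E_ff X Y Z u v * (sff_num X Y Z (d2 (d2 X)) (d2 (d2 Y)) (d2 (d2 Z)) u v / nrm X Y Z u v)
    - 2 * F_ff X Y Z u v * (sff_num X Y Z (d2 (d1 X)) (d2 (d1 Y)) (d2 (d1 Z)) u v / nrm X Y Z u v)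
    + G_ff X Y Z u v * (sff_num X Y Z (d1 (d1 X)) (d1 (d1 Y)) (d1 (d1 Z)) u v / nrm X Y Z u v))
    / (2 * (E_ff X Y Z u v * G_ff X Y Z u v - F_ff X Y Z u v ^ 2)))) by (unfold Q; field; lra).
  rewrite Hm. ring.
Qed.

(* In terms of [psi = Y o (X, Z)^-1]: the Born-Infeld operator of [psi], times [jac^3], is the
   numerator of the mean curvature. *)
Lemma born_infeld_identity (X Y Z : R -> R -> R) u v : jac X Z u v <> 0 ->
  d1 (d2 X) u v = d2 (d1 X) u v -> d1 (d2 Y) u v = d2 (d1 Y) u v ->
  d1 (d2 Z) u v = d2 (d1 Z) u v ->
  ((1 - Dz X Z Y u v ^ 2) * Dxx X Z Y u v + 2 * Dx X Z Y u v * Dz X Z Y u v * Dzx X Z Y u v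
   - (1 + Dx X Z Y u v ^ 2) * Dzz X Z Y u v) * jac X Z u v ^ 3 =
  E_ff X Y Z u v * sff_num X Y Z (d2 (d2 X)) (d2 (d2 Y)) (d2 (d2 Z)) u v
  - 2 * F_ff X Y Z u v * sff_num X Y Z (d2 (d1 X)) (d2 (d1 Y)) (d2 (d1 Z)) u v
  + G_ff X Y Z u v * sff_num X Y Z (d1 (d1 X)) (d1 (d1 Y)) (d1 (d1 Z)) u v.
Proof.
  unfold jac. intros HJ SX SY SZ.
  unfold Dxx, Dzx, Dzz, Dx, Dz, det_ratio_deriv, det_ratio, sff_num, E_ff, F_ff, G_ff,
    N1, N2, N3, lprod.
  rewrite SX, SY, SZ. field. exact HJ.
Qed.

Lemma born_infeld_at (X Y Z : R -> R -> R) (U : R -> R -> Prop) u v :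
  open2 U -> smooth_on U X -> smooth_on U Y -> smooth_on U Z -> U u v ->
  timelike_at X Y Z u v -> mean_curv X Y Z u v = 0 -> jac X Z u v <> 0 ->
  (1 - Dz X Z Y u v ^ 2) * Dxx X Z Y u v + 2 * Dx X Z Y u v * Dz X Z Y u v * Dzx X Z Y u v
  - (1 + Dx X Z Y u v ^ 2) * Dzz X Z Y u v = 0.
Proof.
  intros HU HX HY HZ Huv Ht Hm HJ.
  assert (E := born_infeld_identity X Y Z u v HJ (smooth_d1_d2_comm U X u v HU HX Huv)
    (smooth_d1_d2_comm U Y u v HU HY Huv) (smooth_d1_d2_comm U Z u v HU HZ Huv)).
  rewrite (minimal_sff_num X Y Z u v Ht Hm) in E.
  destruct (Rmult_integral _ _ E) as [E'|E']; [exact E'|].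
  exfalso. exact (pow_nonzero _ 3 HJ E').
Qed.

(** * Minimal surfaces as graphs *)

Section GraphOfInverse.

Variables (X Y Z : R -> R -> R) (U D : R -> R -> Prop) (G1 G2 : R -> R -> R) (K : R).

Hypotheses (HU : open2 U) (HX : smooth_on U X) (HY : smooth_on U Y) (HZ : smooth_on U Z)
  (HD : open2 D) (HK : 0 <= K).
Hypothesis right_inverse : forall x z, D x z ->
  U (G1 x z) (G2 x z) /\ jac X Z (G1 x z) (G2 x z) <> 0 /\
  X (G1 x z) (G2 x z) = x /\ Z (G1 x z) (G2 x z) = z.
Hypothesis lipschitz : forall x z x' z', D x z -> D x' z' ->
  Rabs (G1 x z - G1 x' z') + Rabs (G2 x z - G2 x' z') <= K * (Rabs (x - x') + Rabs (z - z')).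

Let psi (x z : R) : R := Y (G1 x z) (G2 x z).

Lemma continuity_2d_pt_pullback (Phi : R -> R -> R) x z : D x z ->
  continuity_2d_pt Phi (G1 x z) (G2 x z) -> continuity_2d_pt (fun a b => Phi (G1 a b) (G2 a b)) x z.
Proof.
  intros Hxz HPhi. apply continuity_2d_pt_comp; [exact HPhi| |];
  apply (lipschitz_continuity_2d_pt D _ K x z HD Hxz HK); intros x' z' H';
  generalize (lipschitz x' z' x z H' Hxz)
    (Rabs_pos (G1 x' z' - G1 x z)) (Rabs_pos (G2 x' z' - G2 x z));
  lra.
Qed.

Lemma is_derive_pullback_1 (h : R -> R -> R) x z : Ck 1 U h -> D x z ->
  is_derive (fun t => h (G1 t z) (G2 t z)) x (Dx X Z h (G1 x z) (G2 x z)).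
Proof.
  intros Hh Hxz. destruct (right_inverse x z Hxz) as [HUp [HJp [EX EZ]]].
  destruct (is_derive_inverse_path X Z (fun t => G1 t z) (fun t => G2 t z) x _ _ _ _ 1 0 K
    (Ck1_differentiable U X _ _ HU (proj1 (smooth_on_C1 U X HX)) HUp)
    (Ck1_differentiable U Z _ _ HU (proj1 (smooth_on_C1 U Z HZ)) HUp) HJp HK) as [H1 H2].
  { eapply filter_imp; [|apply locally_2d_1d_const_y, (open2_locally_2d D x z HD Hxz)].
    intros t Ht. destruct (right_inverse t z Ht) as [_ [_ [E1 E2]]]. rewrite E1, E2, EX, EZ.
    assert (L := lipschitz t z x z Ht Hxz). rewrite Rminus_eq_0, Rabs_R0, Rplus_0_r in L.
    repeat split; [ring|ring|exact L]. }
  eapply is_derive_eq;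
    [exact (is_derive_comp_2d h _ _ x _ _ _ _ (Ck1_differentiable U h _ _ HU Hh HUp) H1 H2)|].
  unfold jac in HJp. unfold Dx, det_ratio, cramer1, cramer2. field. exact HJp.
Qed.

Lemma is_derive_pullback_2 (h : R -> R -> R) x z : Ck 1 U h -> D x z ->
  is_derive (fun t => h (G1 x t) (G2 x t)) z (Dz X Z h (G1 x z) (G2 x z)).
Proof.
  intros Hh Hxz. destruct (right_inverse x z Hxz) as [HUp [HJp [EX EZ]]].
  destruct (is_derive_inverse_path X Z (fun t => G1 x t) (fun t => G2 x t) z _ _ _ _ 0 1 K
    (Ck1_differentiable U X _ _ HU (proj1 (smooth_on_C1 U X HX)) HUp)
    (Ck1_differentiable U Z _ _ HU (proj1 (smooth_on_C1 U Z HZ)) HUp) HJp HK) as [H1 H2].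
  { eapply filter_imp; [|apply locally_2d_1d_const_x, (open2_locally_2d D x z HD Hxz)].
    intros t Ht. destruct (right_inverse x t Ht) as [_ [_ [E1 E2]]]. rewrite E1, E2, EX, EZ.
    assert (L := lipschitz x t x z Ht Hxz). rewrite Rminus_eq_0, Rabs_R0, Rplus_0_l in L.
    repeat split; [ring|ring|exact L]. }
  eapply is_derive_eq;
    [exact (is_derive_comp_2d h _ _ z _ _ _ _ (Ck1_differentiable U h _ _ HU Hh HUp) H1 H2)|].
  unfold jac in HJp. unfold Dz, det_ratio, cramer1, cramer2. field. exact HJp.
Qed.

Lemma d1_graph x z : D x z -> d1 psi x z = Dx X Z Y (G1 x z) (G2 x z).
Proof. intros Hxz. apply is_derive_unique, is_derive_pullback_1; [apply HY|exact Hxz]. Qed.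

Lemma d2_graph x z : D x z -> d2 psi x z = Dz X Z Y (G1 x z) (G2 x z).
Proof. intros Hxz. apply is_derive_unique, is_derive_pullback_2; [apply HY|exact Hxz]. Qed.

Ltac C1_atom := match goal with
  | |- Ck 1 _ (d1 _) => apply smooth_on_C1_d1; assumption
  | |- Ck 1 _ (d2 _) => apply smooth_on_C1_d2; assumption
  end.

Lemma is_derive_d1_graph_1 x z : D x z ->
  is_derive (fun t => d1 psi t z) x (Dxx X Z Y (G1 x z) (G2 x z)).
Proof.
  intros Hxz.
  apply (is_derive_agree_1 D _ (fun a b => Dx X Z Y (G1 a b) (G2 a b)) x z HD Hxz d1_graph).
  apply is_derive_det_ratio_comp
    with (P := Ck 1 U) (g1 := fun t => G1 t z) (g2 := fun t => G2 t z); try C1_atom;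
    [intros f Hf; apply is_derive_pullback_1; assumption|apply right_inverse, Hxz].
Qed.

Lemma is_derive_d1_graph_2 x z : D x z ->
  is_derive (fun t => d1 psi x t) z (Dxz X Z Y (G1 x z) (G2 x z)).
Proof.
  intros Hxz.
  apply (is_derive_agree_2 D _ (fun a b => Dx X Z Y (G1 a b) (G2 a b)) x z HD Hxz d1_graph).
  apply is_derive_det_ratio_comp
    with (P := Ck 1 U) (g1 := fun t => G1 x t) (g2 := fun t => G2 x t); try C1_atom;
    [intros f Hf; apply is_derive_pullback_2; assumption|apply right_inverse, Hxz].
Qed.

Lemma is_derive_d2_graph_1 x z : D x z ->
  is_derive (fun t => d2 psi t z) x (Dzx X Z Y (G1 x z) (G2 x z)).
Proof.
  intros Hxz.
  apply (is_derive_agree_1 D _ (fun a b => Dz X Z Y (G1 a b) (G2 a b)) x z HD Hxz d2_graph).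
  apply is_derive_det_ratio_comp
    with (P := Ck 1 U) (g1 := fun t => G1 t z) (g2 := fun t => G2 t z); try C1_atom;
    [intros f Hf; apply is_derive_pullback_1; assumption|apply right_inverse, Hxz].
Qed.

Lemma is_derive_d2_graph_2 x z : D x z ->
  is_derive (fun t => d2 psi x t) z (Dzz X Z Y (G1 x z) (G2 x z)).
Proof.
  intros Hxz.
  apply (is_derive_agree_2 D _ (fun a b => Dz X Z Y (G1 a b) (G2 a b)) x z HD Hxz d2_graph).
  apply is_derive_det_ratio_comp
    with (P := Ck 1 U) (g1 := fun t => G1 x t) (g2 := fun t => G2 x t); try C1_atom;
    [intros f Hf; apply is_derive_pullback_2; assumption|apply right_inverse, Hxz].
Qed.

Lemma continuity_2d_pt_Dx u v (h : R -> R -> R) : U u v -> Ck 1 U h -> jac X Z u v <> 0 ->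
  continuity_2d_pt (Dx X Z h) u v.
Proof.
  intros Huv Hh HJ.
  destruct (Ck1_C1_at U h u v Hh Huv) as [_ _ _ c1 c2].
  destruct (Ck1_C1_at U X u v (proj1 (smooth_on_C1 U X HX)) Huv) as [_ _ _ cX1 cX2].
  destruct (Ck1_C1_at U Z u v (proj1 (smooth_on_C1 U Z HZ)) Huv) as [_ _ _ cZ1 cZ2].
  apply continuity_2d_pt_det_ratio; assumption.
Qed.

Lemma continuity_2d_pt_Dz u v (h : R -> R -> R) : U u v -> Ck 1 U h -> jac X Z u v <> 0 ->
  continuity_2d_pt (Dz X Z h) u v.
Proof.
  intros Huv Hh HJ.
  destruct (Ck1_C1_at U h u v Hh Huv) as [_ _ _ c1 c2].
  destruct (Ck1_C1_at U X u v (proj1 (smooth_on_C1 U X HX)) Huv) as [_ _ _ cX1 cX2].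
  destruct (Ck1_C1_at U Z u v (proj1 (smooth_on_C1 U Z HZ)) Huv) as [_ _ _ cZ1 cZ2].
  apply continuity_2d_pt_det_ratio; assumption.
Qed.

Lemma continuity_2d_pt_det_ratio_deriv_C1 (Dop : (R -> R -> R) -> R -> R -> R)
  (F1 F2 F3 F4 F5 F6 F7 F8 : R -> R -> R) u v : U u v ->
  (forall f, Ck 1 U f -> continuity_2d_pt (Dop f) u v) ->
  Ck 1 U F1 -> Ck 1 U F2 -> Ck 1 U F3 -> Ck 1 U F4 ->
  Ck 1 U F5 -> Ck 1 U F6 -> Ck 1 U F7 -> Ck 1 U F8 ->
  F5 u v * F6 u v - F7 u v * F8 u v <> 0 ->
  continuity_2d_pt (det_ratio_deriv Dop F1 F2 F3 F4 F5 F6 F7 F8) u v.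
Proof.
  intros Huv HDop H1 H2 H3 H4 H5 H6 H7 H8 HJ.
  apply continuity_2d_pt_det_ratio_deriv; auto;
    match goal with H : Ck 1 U ?f |- continuity_2d_pt ?f u v =>
      exact (C1_cont _ _ _ (Ck1_C1_at U f u v H Huv)) end.
Qed.

Lemma graph_continuity x z : D x z ->
  continuity_2d_pt psi x z /\ continuity_2d_pt (d1 psi) x z /\ continuity_2d_pt (d2 psi) x z /\
  continuity_2d_pt (d1 (d1 psi)) x z /\ continuity_2d_pt (d2 (d1 psi)) x z /\
  continuity_2d_pt (d1 (d2 psi)) x z /\ continuity_2d_pt (d2 (d2 psi)) x z.
Proof.
  intros Hxz. destruct (right_inverse x z Hxz) as [HUp [HJp _]].
  assert (HY1 := proj1 (smooth_on_C1 U Y HY)).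
  assert (Hdx : forall f, Ck 1 U f -> continuity_2d_pt (Dx X Z f) (G1 x z) (G2 x z))
    by (intros; apply continuity_2d_pt_Dx; assumption).
  assert (Hdz : forall f, Ck 1 U f -> continuity_2d_pt (Dz X Z f) (G1 x z) (G2 x z))
    by (intros; apply continuity_2d_pt_Dz; assumption).
  split; [|split; [|split; [|split; [|split; [|split]]]]].
  - exact (continuity_2d_pt_pullback Y x z Hxz (C1_cont _ _ _ (Ck1_C1_at U Y _ _ HY1 HUp))).
  - apply (continuity_2d_pt_agree D _ (fun a b => Dx X Z Y (G1 a b) (G2 a b)) x z HD Hxz d1_graph).
    exact (continuity_2d_pt_pullback _ x z Hxz (Hdx Y HY1)).
  - apply (continuity_2d_pt_agree D _ (fun a b => Dz X Z Y (G1 a b) (G2 a b)) x z HD Hxz d2_graph).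
    exact (continuity_2d_pt_pullback _ x z Hxz (Hdz Y HY1)).
  - apply (continuity_2d_pt_agree D _ (fun a b => Dxx X Z Y (G1 a b) (G2 a b)) x z HD Hxz);
      [intros a b Hab; exact (is_derive_unique _ _ _ (is_derive_d1_graph_1 a b Hab))|].
    apply continuity_2d_pt_pullback; [exact Hxz|].
    apply continuity_2d_pt_det_ratio_deriv_C1; try C1_atom; assumption.
  - apply (continuity_2d_pt_agree D _ (fun a b => Dxz X Z Y (G1 a b) (G2 a b)) x z HD Hxz);
      [intros a b Hab; exact (is_derive_unique _ _ _ (is_derive_d1_graph_2 a b Hab))|].
    apply continuity_2d_pt_pullback; [exact Hxz|].
    apply continuity_2d_pt_det_ratio_deriv_C1; try C1_atom; assumption.
  - apply (continuity_2d_pt_agree D _ (fun a b => Dzx X Z Y (G1 a b) (G2 a b)) x z HD Hxz);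
      [intros a b Hab; exact (is_derive_unique _ _ _ (is_derive_d2_graph_1 a b Hab))|].
    apply continuity_2d_pt_pullback; [exact Hxz|].
    apply continuity_2d_pt_det_ratio_deriv_C1; try C1_atom; assumption.
  - apply (continuity_2d_pt_agree D _ (fun a b => Dzz X Z Y (G1 a b) (G2 a b)) x z HD Hxz);
      [intros a b Hab; exact (is_derive_unique _ _ _ (is_derive_d2_graph_2 a b Hab))|].
    apply continuity_2d_pt_pullback; [exact Hxz|].
    apply continuity_2d_pt_det_ratio_deriv_C1; try C1_atom; assumption.
Qed.

Lemma graph_C2 : Ck 2 D psi.
Proof.
  apply Ck2_of_partials; [exact graph_continuity|].
  intros x z Hxz. assert (HY1 := proj1 (smooth_on_C1 U Y HY)).
  repeat split; eexists;
    [ exact (is_derive_pullback_1 Y x z HY1 Hxz) | exact (is_derive_pullback_2 Y x z HY1 Hxz)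
    | exact (is_derive_d1_graph_1 x z Hxz) | exact (is_derive_d1_graph_2 x z Hxz)
    | exact (is_derive_d2_graph_1 x z Hxz) | exact (is_derive_d2_graph_2 x z Hxz) ].
Qed.

Hypothesis minimal : forall u v, U u v -> timelike_at X Y Z u v /\ mean_curv X Y Z u v = 0.

Lemma born_infeld_graph : born_infeld D psi.
Proof.
  split; [exact graph_C2|]. intros x z Hxz.
  assert (Exx : d1 (d1 psi) x z = Dxx X Z Y (G1 x z) (G2 x z))
    by exact (is_derive_unique _ _ _ (is_derive_d1_graph_1 x z Hxz)).
  assert (Ezx : d1 (d2 psi) x z = Dzx X Z Y (G1 x z) (G2 x z))
    by exact (is_derive_unique _ _ _ (is_derive_d2_graph_1 x z Hxz)).
  assert (Ezz : d2 (d2 psi) x z = Dzz X Z Y (G1 x z) (G2 x z))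
    by exact (is_derive_unique _ _ _ (is_derive_d2_graph_2 x z Hxz)).
  rewrite (d1_graph x z Hxz), (d2_graph x z Hxz), Exx, Ezx, Ezz.
  destruct (right_inverse x z Hxz) as [HUp [HJp _]]. destruct (minimal _ _ HUp) as [Ht Hm].
  exact (born_infeld_at X Y Z U _ _ HU HX HY HZ HUp Ht Hm HJp).
Qed.

End GraphOfInverse.

Lemma image_is_graph (X Y Z : R -> R -> R) (W D : R -> R -> Prop) (G1 G2 : R -> R -> R) :
  local_inverse X Z W D G1 G2 ->
  forall x y z, (exists u v, W u v /\ X u v = x /\ Y u v = y /\ Z u v = z) <->
    (D x z /\ y = Y (G1 x z) (G2 x z)).
Proof.
  intros [HDW HWD] x y z. split.
  - intros (u & v & Hw & <- & <- & <-). destruct (HWD u v Hw) as (HD & -> & ->). auto.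
  - intros [Hxz ->]. destruct (HDW x z Hxz) as (Hw & E1 & E2). exists (G1 x z), (G2 x z). auto.
Qed.

Lemma graph_over_xz (X Y Z : R -> R -> R) (U : R -> R -> Prop) u0 v0 :
  open2 U -> smooth_on U X -> smooth_on U Y -> smooth_on U Z ->
  (forall u v, U u v -> timelike_at X Y Z u v /\ mean_curv X Y Z u v = 0) ->
  U u0 v0 -> jac X Z u0 v0 <> 0 ->
  exists W, open2 W /\ W u0 v0 /\ (forall u v, W u v -> U u v) /\
    exists D psi, open2 D /\ born_infeld D psi /\
      forall x y z, (exists u v, W u v /\ X u v = x /\ Y u v = y /\ Z u v = z) <->
        (D x z /\ y = psi x z).
Proof.
  intros HU HX HY HZ Hmin H0 HJ.
  destruct (inverse_function_theorem X Z U u0 v0 HU (proj1 (smooth_on_C1 U X HX))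
    (proj1 (smooth_on_C1 U Z HZ)) H0 HJ)
    as (W & D & G1 & G2 & K & HW & HD & HW0 & HWU & Hinv & HK & HL).
  exists W. split; [exact HW|]. split; [exact HW0|]. split; [intros u v Huv; apply HWU, Huv|].
  exists D, (fun x z => Y (G1 x z) (G2 x z)). split; [exact HD|]. split.
  - apply (born_infeld_graph X Y Z U D G1 G2 K); auto.
    intros x z Hxz. destruct (proj1 Hinv x z Hxz) as [Hw E]. destruct (HWU _ _ Hw). auto.
  - exact (image_is_graph X Y Z W D G1 G2 Hinv).
Qed.

(** * Exchanging the x and y axes *)

Lemma timelike_jac_nonzero (X Y Z : R -> R -> R) u v :
  timelike_at X Y Z u v -> jac X Z u v <> 0 \/ jac Y Z u v <> 0.
Proof.
  unfold timelike_at. intros Ht. assert (E := lprod_normal X Y Z u v). unfold lprod in E.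
  replace (N1 Y Z u v) with (jac Y Z u v) in E by (unfold N1, jac; ring).
  replace (N2 X Z u v) with (- jac X Z u v) in E by (unfold N2, jac; ring).
  destruct (Req_dec (jac X Z u v) 0) as [h|h]; [right|left; exact h].
  intros h'. rewrite h, h' in E. nra.
Qed.

Lemma first_ff_swap (X Y Z : R -> R -> R) u v :
  E_ff Y X Z u v = E_ff X Y Z u v /\ F_ff Y X Z u v = F_ff X Y Z u v /\
  G_ff Y X Z u v = G_ff X Y Z u v.
Proof. unfold E_ff, F_ff, G_ff, lprod. repeat split; ring. Qed.

Lemma unit_normal_swap (X Y Z : R -> R -> R) u v :
  n1 Y X Z u v = - n2 X Y Z u v /\ n2 Y X Z u v = - n1 X Y Z u v /\ n3 Y X Z u v = - n3 X Y Z u v.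
Proof.
  assert (e1 : N1 X Z u v = - N2 X Z u v) by (unfold N1, N2; ring).
  assert (e2 : N2 Y Z u v = - N1 Y Z u v) by (unfold N1, N2; ring).
  assert (e3 : N3 Y X u v = - N3 X Y u v) by (unfold N3; ring).
  assert (en : nrm Y X Z u v = nrm X Y Z u v).
  { unfold nrm. rewrite e1, e2, e3. do 2 f_equal. unfold lprod. ring. }
  unfold n1, n2, n3. rewrite e1, e2, e3, en. unfold Rdiv. repeat split; ring.
Qed.

Lemma timelike_at_swap (X Y Z : R -> R -> R) u v : timelike_at Y X Z u v <-> timelike_at X Y Z u v.
Proof. unfold timelike_at. destruct (first_ff_swap X Y Z u v) as (-> & -> & ->). tauto. Qed.

Lemma mean_curv_swap (X Y Z : R -> R -> R) u v : mean_curv Y X Z u v = - mean_curv X Y Z u v.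
Proof.
  destruct (first_ff_swap X Y Z u v) as (EE & EF & EG).
  destruct (unit_normal_swap X Y Z u v) as (e1 & e2 & e3).
  unfold mean_curv, L_sf, M_sf, N_sf. rewrite EE, EF, EG, e1, e2, e3. unfold lprod, Rdiv. ring.
Qed.

Theorem theorem2p1 (X Y Z : R -> R -> R) (U : R -> R -> Prop) :
  timelike_minimal_surface X Y Z U ->
  forall u0 v0, U u0 v0 ->
  exists W : R -> R -> Prop,
    open2 W /\ W u0 v0 /\ (forall u v, W u v -> U u v) /\
    ( (exists (D : R -> R -> Prop) (psi : R -> R -> R),
         open2 D /\ born_infeld D psi /\
         forall x y z,
           (exists u v, W u v /\ X u v = x /\ Y u v = y /\ Z u v = z) <->
           (D x z /\ y = psi x z))
    \/
      (exists (D : R -> R -> Prop) (psi : R -> R -> R),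
         open2 D /\ born_infeld D psi /\
         forall x y z,
           (exists u v, W u v /\ X u v = x /\ Y u v = y /\ Z u v = z) <->
           (D y z /\ x = psi y z)) ).
Proof.
  intros (HU & HX & HY & HZ & Hsurf) u0 v0 H0.
  assert (Hmin : forall u v, U u v -> timelike_at X Y Z u v /\ mean_curv X Y Z u v = 0)
    by (intros u v Huv; exact (proj2 (Hsurf u v Huv))).
  destruct (timelike_jac_nonzero X Y Z u0 v0 (proj1 (Hmin u0 v0 H0))) as [HJ|HJ].
  - destruct (graph_over_xz X Y Z U u0 v0 HU HX HY HZ Hmin H0 HJ) as (W & HW & HW0 & HWU & Hgraph).
    exists W. auto.
  - assert (Hmin' : forall u v, U u v -> timelike_at Y X Z u v /\ mean_curv Y X Z u v = 0).
    { intros u v Huv. rewrite timelike_at_swap, mean_curv_swap.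
      destruct (Hmin u v Huv) as [Ht ->]. split; [exact Ht|ring]. }
    destruct (graph_over_xz Y X Z U u0 v0 HU HY HX HZ Hmin' H0 HJ)
      as (W & HW & HW0 & HWU & D & psi & HD & Hbi & Hgraph).
    exists W. split; [exact HW|]. split; [exact HW0|]. split; [exact HWU|].
    right. exists D, psi. split; [exact HD|]. split; [exact Hbi|].
    intros x y z. rewrite <- Hgraph.
    split; intros (u & v & Hw & E1 & E2 & E3); exists u, v; auto.
Qed.
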